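(* For any integer $t>0$, any integer-valued function $f$ with $f(n)\in O(n^t)$, and any desired bound $\varepsilon_{\mathrm{premature}}>0$, there exists a (two-way) probabilistic finite automaton whose expected runtime on inputs of length $n$ is in $O(n^{t+1})$, and such that, on every input of length $n$, the probability that this machine halts in fewer than $f(n)$ time-steps is at most $\varepsilon_{\mathrm{premature}}$.
   Context: A (two-way) probabilistic finite automaton is a finite-state machine with a single read-only head on an input tape containing $\rhd w\lhd$ (with $\rhd,\lhd$ end-markers), starting on $\rhd$, which in each step may flip a fair coin and, depending on its state, the scanned symbol and the coin outcome, changes state and moves its head one cell left, right, or not at all; it has no work tape and no interaction with any other party. $n$ denotes the length of the input string $w$. *)

From HB Require Import structures.
From mathcomp Require Import all_boot all_order all_algebra.
From mathcomp Require Import reals.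
Set Implicit Arguments. Unset Strict Implicit. Unset Printing Implicit Defensive.
Import Order.TTheory GRing.Theory Num.Theory.
Local Open Scope ring_scope.

Inductive move := MoveL | MoveS | MoveR.

Inductive tapesym (Sigma : Type) := TLeft | TRight | TSym of Sigma.
Arguments TLeft {Sigma}. Arguments TRight {Sigma}.

Record pfa (Sigma : finType) := PFA {
  pfa_state : finType;
  pfa_start : pfa_state;
  pfa_halting : pred pfa_state;
  pfa_delta : pfa_state -> tapesym Sigma -> bool -> pfa_state * move
}.
Arguments pfa_state {Sigma} p.
Arguments pfa_start {Sigma} p.
Arguments pfa_halting {Sigma} p.
Arguments pfa_delta {Sigma} p.

Section Semantics.
Variables (Sigma : finType) (M : pfa Sigma) (w : seq Sigma).

(* Tape contents |> w <| ; cell 0 is |>, cells 1..n hold w, cell n+1 is <|. *)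
Definition cell (i : nat) : tapesym Sigma :=
  if i == 0%N then TLeft
  else match nth None (map Some w) i.-1 with Some a => TSym a | None => TRight end.

Definition config := (pfa_state M * nat)%type.

(* One step; halting states are absorbing. The head never leaves the
   end-markers (moves beyond them are clamped). *)
Definition step (c : config) (b : bool) : config :=
  let: (q, i) := c in
  if pfa_halting M q then (q, i) else
  let: (q', m) := pfa_delta M q (cell i) b in
  (q', match m with
       | MoveL => i.-1
       | MoveS => i
       | MoveR => if (i <= size w)%N then i.+1 else i
       end).

Fixpoint run (coins : nat -> bool) (k : nat) : config :=
  match k with
  | 0%N => (pfa_start M, 0%N)
  | k'.+1 => step (run coins k') (coins k')
  end.

Definition coins_of (m : nat) (s : {ffun 'I_m -> bool}) : nat -> bool :=
  fun i => match insub i with Some j => s j | None => false end.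

Variable R : realType.

(* P(runtime > k): fraction of the 2^k coin strings of length k after which
   the machine has not yet halted. *)
Definition prob_running_after (k : nat) : R :=
  (#|[set s : {ffun 'I_k -> bool} | ~~ pfa_halting M (run (coins_of s) k).1]|%:R)
  / (2 ^+ k).

(* P(runtime < m): the machine reaches a halting state at some step j < m. *)
Definition prob_halts_before (m : nat) : R :=
  (#|[set s : {ffun 'I_m -> bool} |
      [exists j : 'I_m, pfa_halting M (run (coins_of s) j).1]]|%:R)
  / (2 ^+ m).

Definition prob_halts_before_int (z : int) : R :=
  match z with Posz m => prob_halts_before m | Negz _ => 0 end.

(* Expected runtime E[T] = sum_{k>=0} P(T > k) is at most B,
   i.e. all partial sums of this nonnegative series are at most B. *)
Definition expected_runtime_le (B : R) : Prop :=
  forall K : nat, \sum_(k < K) prob_running_after k <= B.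

End Semantics.

From HB Require Import structures.
From mathcomp Require Import all_boot all_order all_algebra.
From mathcomp Require Import reals.
From mathcomp Require Import ring lra.
Set Implicit Arguments. Unset Strict Implicit. Unset Printing Implicit Defensive.
Import Order.TTheory GRing.Theory Num.Theory.
Local Open Scope ring_scope.

(* The automaton first idles for K steps, K bounding |f| on the finitely many
   inputs too short for the asymptotic bound on f.  It then plays rounds: it
   sweeps the tape and runs t successive fair random walks on the input cells,
   each started next to the left end-marker; a walk falling off the left end
   starts a new round, and the machine halts once all t walks of a round reach
   the right end-marker.  With L = n + 1, a walk takes O(L) expected steps and
   succeeds with probability 1/L, so a potential decreasing by 1 per step in
   expectation certifies the expected runtime O(L^(t+1)).  Conversely, in the
   j-th walk the head position p, scaled to p L^j / L^t, is a martingale, and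
   each step raises its expectation by at most 1/((2L+1) L^t); halting means
   reaching 1, so halting within f(n) = O(n^t) steps has probability O(1/n). *)

Lemma bigO_pow_div_le (R : realFieldType) (C eps x : R) (n k : nat) :
  0 < eps -> `|C| / eps < n%:R -> x <= C * n%:R ^+ k ->
  x / ((2 * n.+1%:R + 1) * n.+1%:R ^+ k) <= eps.
Proof.
move=> eps_gt0 C_lt x_le.
have n_ge0 := ler0n R n.
rewrite ltr_pdivrMr // in C_lt.
have pow_gt0 : 0 < n.+1%:R ^+ k :> R by rewrite exprn_gt0 ?ltr0n.
have C_le : C * n%:R ^+ k <= `|C| * n.+1%:R ^+ k.
  apply: le_trans (_ : `|C| * n%:R ^+ k <= _); first by rewrite ler_wpM2r ?exprn_ge0 ?ler_norm.
  by rewrite ler_wpM2l // lerXn2r ?nnegrE ?ler_nat.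
have normC_le : `|C| * n.+1%:R ^+ k <= eps * (2 * n.+1%:R + 1) * n.+1%:R ^+ k.
  have := mulr_ge0 n_ge0 (ltW eps_gt0).
  by rewrite ler_pM2r // -natr1; lra.
rewrite ler_pdivrMr ?mulr_gt0 // ?mulrA; first lra.
by rewrite -natr1; lra.
Qed.

Lemma coins_ofE k (s : {ffun 'I_k -> bool}) (i : 'I_k) : coins_of s i = s i.
Proof. by rewrite /coins_of valK. Qed.

Definition fcons k (b : bool) (s : {ffun 'I_k -> bool}) : {ffun 'I_k.+1 -> bool} :=
  [ffun i : 'I_k.+1 => if val i is i'.+1 then coins_of s i' else b].

Lemma coins_of_fcons0 k b (s : {ffun 'I_k -> bool}) : coins_of (fcons b s) 0 = b.
Proof. by rewrite (coins_ofE _ ord0) ffunE. Qed.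

Lemma coins_of_fconsS k b (s : {ffun 'I_k -> bool}) i :
  coins_of (fcons b s) i.+1 = coins_of s i.
Proof.
case: (ltnP i k) => [lt_ik | le_ki].
  by rewrite (coins_ofE _ (Ordinal (lt_ik : i.+1 < k.+1)%N)) ffunE.
by rewrite /coins_of !insubF // ltnNge ?ltnS le_ki.
Qed.

Lemma fcons_bij k : bijective (fun p : bool * {ffun 'I_k -> bool} => fcons p.1 p.2).
Proof.
exists (fun s : {ffun 'I_k.+1 -> bool} => (s ord0, [ffun j : 'I_k => s (lift ord0 j)])).
  move=> [b s] /=; rewrite ffunE; congr pair.
  by apply/ffunP => j; rewrite !ffunE /= coins_ofE.
move=> s; apply/ffunP => -[[|i] lt_ik]; rewrite ffunE /=.
  by congr (s _); apply: val_inj.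
by rewrite (coins_ofE _ (Ordinal (lt_ik : i < k)%N)) ffunE; congr (s _); apply: val_inj.
Qed.

Section CoinAverage.
Variable R : numFieldType.

Definition coin_avg k (F : {ffun 'I_k -> bool} -> R) : R := (\sum_s F s) / 2 ^+ k.

Lemma eq_coin_avg k (F G : {ffun 'I_k -> bool} -> R) : F =1 G -> coin_avg F = coin_avg G.
Proof. by move=> eqFG; rewrite /coin_avg (eq_bigr _ (fun s _ => eqFG s)). Qed.

Lemma coin_avg_const k (x : R) : coin_avg (fun _ : {ffun 'I_k -> bool} => x) = x.
Proof.
rewrite /coin_avg sumr_const card_ffun card_bool card_ord -[x *+ _]mulr_natr natrX.
by rewrite mulfK // expf_neq0 // pnatr_eq0.
Qed.

Lemma coin_avgS k (F : {ffun 'I_k.+1 -> bool} -> R) :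
  coin_avg F =
  (coin_avg (fun s => F (fcons true s)) + coin_avg (fun s => F (fcons false s))) / 2.
Proof.
rewrite /coin_avg (reindex _ (onW_bij _ (fcons_bij k))) /=.
rewrite -(pair_bigA _ (fun b s => F (fcons b s))) big_bool /= exprS.
by field; rewrite expf_neq0 // pnatr_eq0.
Qed.

Lemma coin_avg_card k (P : pred {ffun 'I_k -> bool}) :
  #|[set s | P s]|%:R / 2 ^+ k = coin_avg (fun s => (P s : nat)%:R).
Proof.
rewrite /coin_avg -sum1_card natr_sum big_mkcond /=.
by congr (_ / _); apply: eq_bigr => s _; rewrite inE; case: (P s).
Qed.

End CoinAverage.

Section Runs.
Variables (Sigma : finType) (M : pfa Sigma) (w : seq Sigma).

Fixpoint run_from (c : config M) (coins : nat -> bool) (k : nat) : config M :=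
  if k is k'.+1 then step w (run_from c coins k') (coins k') else c.

Lemma run_run_from coins k : run M w coins k = run_from (pfa_start M, 0%N) coins k.
Proof. by elim: k => //= k ->. Qed.

Lemma run_from_fcons c b k (s : {ffun 'I_k -> bool}) m :
  run_from c (coins_of (fcons b s)) m.+1 = run_from (step w c b) (coins_of s) m.
Proof.
elim: m => [|m IHm]; first by rewrite /= coins_of_fcons0.
by rewrite /= -IHm coins_of_fconsS.
Qed.

Lemma step_halting c b : pfa_halting M c.1 -> step w c b = c.
Proof. by case: c => q i /= hq; rewrite /step hq. Qed.

Lemma halted_before_fcons c b k (s : {ffun 'I_k -> bool}) :
  ~~ pfa_halting M c.1 ->
  [exists j : 'I_k.+1, pfa_halting M (run_from c (coins_of (fcons b s)) j).1] =
  [exists j : 'I_k, pfa_halting M (run_from (step w c b) (coins_of s) j).1].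
Proof.
move=> c_run; apply/existsP/existsP => -[j hj].
  case: j hj => [[|j] lt_jk] hj; first by rewrite /= (negbTE c_run) in hj.
  by exists (Ordinal (lt_jk : j < k)%N); rewrite -run_from_fcons.
by exists (Ordinal (ltn_ord j : j.+1 < k.+1)%N); rewrite run_from_fcons.
Qed.

Variable R : realType.

Definition prob_running_from (c : config M) k : R :=
  coin_avg (fun s : {ffun 'I_k -> bool} =>
    (~~ pfa_halting M (run_from c (coins_of s) k).1 : nat)%:R).

Definition prob_halts_before_from (c : config M) m : R :=
  coin_avg (fun s : {ffun 'I_m -> bool} =>
    ([exists j : 'I_m, pfa_halting M (run_from c (coins_of s) j).1] : nat)%:R).

Lemma prob_running_afterE k :
  prob_running_after M w R k = prob_running_from (pfa_start M, 0%N) k.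
Proof.
by rewrite /prob_running_after coin_avg_card; apply: eq_coin_avg => s; rewrite run_run_from.
Qed.

Lemma prob_halts_beforeE m :
  prob_halts_before M w R m = prob_halts_before_from (pfa_start M, 0%N) m.
Proof.
rewrite /prob_halts_before coin_avg_card; apply: eq_coin_avg => s.
by congr (nat_of_bool _)%:R; apply: eq_existsb => j; rewrite run_run_from.
Qed.

Lemma prob_running_from0 c : prob_running_from c 0 = (~~ pfa_halting M c.1 : nat)%:R.
Proof. by rewrite /prob_running_from /= coin_avg_const. Qed.

Lemma prob_running_fromS c k :
  prob_running_from c k.+1 =
  (prob_running_from (step w c true) k + prob_running_from (step w c false) k) / 2.
Proof.
by rewrite /prob_running_from coin_avgS; congr ((_ + _) / _); apply: eq_coin_avg => s;
  rewrite run_from_fcons.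
Qed.

Lemma prob_halts_before_from0 c : prob_halts_before_from c 0 = 0.
Proof.
rewrite /prob_halts_before_from -[RHS](coin_avg_const 0 0); apply: eq_coin_avg => s.
by case: existsP => // -[[]].
Qed.

Lemma prob_halts_before_from_halting c m :
  pfa_halting M c.1 -> prob_halts_before_from c m.+1 = 1.
Proof.
move=> hc; rewrite /prob_halts_before_from -[RHS](coin_avg_const m.+1); apply: eq_coin_avg.
by move=> s; case: existsP => // -[]; exists ord0.
Qed.

Lemma prob_halts_before_fromS c m :
  ~~ pfa_halting M c.1 ->
  prob_halts_before_from c m.+1 =
  (prob_halts_before_from (step w c true) m + prob_halts_before_from (step w c false) m) / 2.
Proof.
by move=> c_run; rewrite /prob_halts_before_from coin_avgS;
  congr ((_ + _) / _); apply: eq_coin_avg => s; rewrite halted_before_fcons.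
Qed.

Section Potentials.
Variable Inv : config M -> Prop.
Hypothesis Inv_step : forall c b, Inv c -> Inv (step w c b).

Section ExpectedRuntime.
Variable V : config M -> R.
Hypothesis V_ge0 : forall c, Inv c -> 0 <= V c.
Hypothesis V_step : forall c, Inv c -> ~~ pfa_halting M c.1 ->
  1 + (V (step w c true) + V (step w c false)) / 2 <= V c.

Lemma sum_prob_running_from_le K c : Inv c -> \sum_(k < K) prob_running_from c k <= V c.
Proof.
elim: K c => [|K IHK] c Ic; first by rewrite big_ord0 V_ge0.
rewrite big_ord_recl prob_running_from0.
under eq_bigr => k _ do rewrite /bump /= prob_running_fromS.
rewrite -mulr_suml big_split /=.
have := IHK _ (Inv_step true Ic); have := IHK _ (Inv_step false Ic).
have [hc|c_run] /= := boolP (pfa_halting M c.1).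
  by rewrite !step_halting //; have := IHK _ Ic; lra.
by have := V_step Ic c_run; lra.
Qed.

Lemma expected_runtime_le_potential :
  Inv (pfa_start M, 0%N) -> expected_runtime_le M w (V (pfa_start M, 0%N)).
Proof.
move=> Istart K; under eq_bigr => k _ do rewrite prob_running_afterE.
exact: sum_prob_running_from_le.
Qed.

End ExpectedRuntime.

Section HaltingProbability.
Variable W : config M -> nat -> R.
Hypothesis W0_ge0 : forall c, Inv c -> 0 <= W c 0%N.
Hypothesis W_halting : forall c m, Inv c -> pfa_halting M c.1 -> 1 <= W c m.+1.
Hypothesis W_step : forall c m, Inv c -> ~~ pfa_halting M c.1 ->
  (W (step w c true) m + W (step w c false) m) / 2 <= W c m.+1.

Lemma prob_halts_before_from_le m c : Inv c -> prob_halts_before_from c m <= W c m.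
Proof.
elim: m c => [|m IHm] c Ic; first by rewrite prob_halts_before_from0 W0_ge0.
have [hc|c_run] := boolP (pfa_halting M c.1).
  by rewrite prob_halts_before_from_halting // W_halting.
rewrite prob_halts_before_fromS //.
have := IHm _ (Inv_step true Ic); have := IHm _ (Inv_step false Ic).
by have := W_step m Ic c_run; lra.
Qed.

Lemma prob_halts_before_le_potential m :
  Inv (pfa_start M, 0%N) -> prob_halts_before M w R m <= W (pfa_start M, 0%N) m.
Proof. by rewrite prob_halts_beforeE; apply: prob_halts_before_from_le. Qed.

End HaltingProbability.
End Potentials.
End Runs.

Inductive clock_state (K r : nat) :=
  | Delay of 'I_K.+1 | SweepRight | SweepLeft | Walk of 'I_r.+1 | Return of 'I_r.+1 | Halt.
Arguments Delay {K r}. Arguments SweepRight {K r}. Arguments SweepLeft {K r}.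
Arguments Walk {K r}. Arguments Return {K r}. Arguments Halt {K r}.

Definition clock_state_enc K r (q : clock_state K r) :
    'I_K.+1 + ('I_r.+1 + ('I_r.+1 + option bool)) :=
  match q with
  | Delay k => inl k | Walk j => inr (inl j) | Return j => inr (inr (inl j))
  | SweepRight => inr (inr (inr (Some true))) | SweepLeft => inr (inr (inr (Some false)))
  | Halt => inr (inr (inr None))
  end.

Definition clock_state_dec K r (y : 'I_K.+1 + ('I_r.+1 + ('I_r.+1 + option bool))) :
    clock_state K r :=
  match y with
  | inl k => Delay k | inr (inl j) => Walk j | inr (inr (inl j)) => Return j
  | inr (inr (inr (Some true))) => SweepRight | inr (inr (inr (Some false))) => SweepLeft
  | inr (inr (inr None)) => Halt
  end.

Lemma clock_state_encK K r : cancel (@clock_state_enc K r) (@clock_state_dec K r).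
Proof. by case. Qed.

HB.instance Definition _ K r :=
  Finite.copy (clock_state K r) (can_type (@clock_state_encK K r)).

Section Clock.
Variables (Sigma : finType) (K r : nat).

Definition clock_delta (q : clock_state K r) (a : tapesym Sigma) (b : bool) :
    clock_state K r * move :=
  match q with
  | Delay k => (if val k is k'.+1 then Delay (inord k') else SweepRight, MoveS)
  | SweepRight => if a is TRight then (SweepLeft, MoveL) else (SweepRight, MoveR)
  | SweepLeft => if a is TLeft then (Walk ord0, MoveR) else (SweepLeft, MoveL)
  | Walk j => match a with
              | TLeft => (SweepRight, MoveS)
              | TRight => (Return j, MoveL)
              | TSym _ => (Walk j, if b then MoveR else MoveL)
              end
  | Return j => if a is TLeft then
                  if (j < r)%N then (Walk (inord j.+1), MoveR) else (Halt, MoveS)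
                else (Return j, MoveL)
  | Halt => (Halt, MoveS)
  end.

Definition clock : pfa Sigma :=
  PFA (Delay ord_max) (fun q => if q is Halt then true else false) clock_delta.

Variable w : seq Sigma.

Variant cell_spec : nat -> tapesym Sigma -> Prop :=
  | CellLeft : cell_spec 0 TLeft
  | CellSym i a of (i < size w)%N : cell_spec i.+1 (TSym a)
  | CellRight : cell_spec (size w).+1 TRight.

Lemma cellP i : (i <= (size w).+1)%N -> cell_spec i (cell w i).
Proof.
rewrite /cell; case: i => [|i] //= le_iw; first exact: CellLeft.
have [le_wi|lt_iw] := leqP (size w) i.
  have -> : i = size w by apply/eqP; rewrite eqn_leq -ltnS le_iw le_wi.
  by rewrite nth_default ?size_map //; apply: CellRight.
case E: (nth None (map Some w) i) => [a|]; first exact: CellSym.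
have : nth None (map Some w) i \in map Some w by rewrite mem_nth ?size_map.
by rewrite E => /mapP[].
Qed.

Definition head_on_tape (c : config clock) := (c.2 <= (size w).+1)%N.

Lemma head_on_tape_step c b : head_on_tape c -> head_on_tape (step w c b).
Proof.
case: c => q i; rewrite /head_on_tape /step /=.
case: (if q is Halt then true else false) => //=.
case: (clock_delta q (cell w i) b) => q' [] /=.
- by move=> le_iw; apply: leq_trans (leq_pred _) le_iw.
- by [].
- by case: ifP => // le_iw _; rewrite ltnS.
Qed.

Variable R : realType.

Definition tape_end : R := (size w).+1%:R.
Definition round_cost : R := 3 * tape_end + 5.
Definition restart_pot : R := round_cost * tape_end ^+ r.+1.
Definition walk_slope (j : nat) : R := round_cost * tape_end ^+ j - 4.
Definition walk_pot (j : nat) (p : R) : R :=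
  p * (tape_end - p) + restart_pot + 1 - p * walk_slope j.

(* A super-solution of the expected-time equations: p (L - p) is the expected
   duration of a fair walk from p absorbed at 0 and L, and the walk is absorbed
   at L with probability p / L. *)
Definition runtime_pot (c : config clock) : R :=
  let p := c.2%:R in
  match c.1 with
  | Delay k => restart_pot + (val k)%:R + 1
  | SweepRight => restart_pot - p
  | SweepLeft => p + 1 + walk_pot 0 1
  | Walk j => walk_pot j p
  | Return j => p + 1 + (if (j < r)%N then walk_pot j.+1 1 else 0)
  | Halt => 0
  end.

Lemma tape_endE : tape_end = (size w)%:R + 1.
Proof. by rewrite /tape_end natr1. Qed.

Lemma tape_end_ge1 : 1 <= tape_end.
Proof. by rewrite /tape_end ler1n. Qed.

Lemma walk_pot_mid j (x : R) :
  1 + (walk_pot j (x + 1) + walk_pot j (x - 1)) / 2 = walk_pot j x.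
Proof. by rewrite /walk_pot; field. Qed.

Lemma round_cost_pow_le j : (j <= r.+1)%N -> round_cost * tape_end ^+ j <= restart_pot.
Proof.
move=> le_jr; rewrite /restart_pot ler_wpM2l ?ler_weXn2l ?tape_end_ge1 //.
by rewrite /round_cost; have := tape_end_ge1; lra.
Qed.

Lemma walk_pot_ge0 j p : (j <= r)%N -> 0 <= p <= tape_end -> 0 <= walk_pot j p.
Proof.
move=> le_jr /andP[p_ge0 le_pL].
have cost_ge0 : 0 <= round_cost * tape_end ^+ j.
  by rewrite mulr_ge0 ?exprn_ge0 /round_cost; have := tape_end_ge1; lra.
have : p * walk_slope j <= p * (round_cost * tape_end ^+ j).
  by rewrite ler_wpM2l // /walk_slope; lra.
have : p * (round_cost * tape_end ^+ j) <= tape_end * (round_cost * tape_end ^+ j).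
  by rewrite ler_wpM2r.
have := round_cost_pow_le (j := j.+1) le_jr; rewrite exprS.
have : 0 <= p * (tape_end - p) by rewrite mulr_ge0 // subr_ge0.
by rewrite /walk_pot; lra.
Qed.

Lemma runtime_pot_ge0 c : head_on_tape c -> 0 <= runtime_pot c.
Proof.
case: c => q p; rewrite /head_on_tape /= => le_pw.
have p_ge0 : 0 <= p%:R :> R := ler0n _ _.
have le_pL : p%:R <= tape_end by rewrite /tape_end ler_nat.
have := round_cost_pow_le (leq0n r.+1); rewrite expr0 mulr1 /round_cost => cost_le.
have := tape_end_ge1 => L_ge1.
have walk1_ge0 j : (j <= r)%N -> 0 <= walk_pot j 1.
  by move=> le_jr; rewrite walk_pot_ge0 // ler01 tape_end_ge1.
case: q => [k| | |j|j|]; rewrite /runtime_pot /=.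
- by have := ler0n R k; lra.
- lra.
- by have := walk1_ge0 0%N (leq0n r); lra.
- by rewrite walk_pot_ge0 ?p_ge0 // -ltnS.
- case: ifP => lt_jr; last lra.
  by have := walk1_ge0 _ lt_jr; lra.
- by [].
Qed.

Lemma runtime_pot_step c : (0 < size w)%N -> head_on_tape c -> ~~ pfa_halting clock c.1 ->
  1 + (runtime_pot (step w c true) + runtime_pot (step w c false)) / 2 <= runtime_pot c.
Proof.
move=> w_gt0; case: c => q p; rewrite /head_on_tape /= => le_pw.
have L_ge2 : 2 <= tape_end.
  have : 1 <= (size w)%:R :> R by rewrite ler1n.
  by rewrite tape_endE; lra.
have p_ge0 : 0 <= p%:R :> R := ler0n _ _.
have L_eq := tape_endE.
case: q => [k| | |j|j|] //= _; rewrite /step /=.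
- case: k => [[|k] lt_kK]; rewrite /runtime_pot /=; first lra.
  by rewrite inordK ?(ltnW lt_kK) // -[k.+1%:R]natr1; lra.
- case: (cellP le_pw) => [|i a lt_iw|]; rewrite /runtime_pot /=.
  + lra.
  + by rewrite lt_iw -[i.+2%:R]natr1; lra.
  + by rewrite /walk_pot /walk_slope /round_cost expr0 mulr1 -/tape_end; lra.
- case: (cellP le_pw) => [|i a lt_iw|]; rewrite /runtime_pot /=.
  + lra.
  + by rewrite -[i.+1%:R]natr1; lra.
  + by rewrite -[(size w).+1%:R]natr1; lra.
- case: (cellP le_pw) => [|i a lt_iw|]; rewrite /runtime_pot /=.
  + by rewrite /walk_pot; lra.
  + rewrite lt_iw -(walk_pot_mid j i.+1%:R) natr1.
    by have -> : i.+1%:R - 1 = i%:R :> R by rewrite -natr1 addrK.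
  + rewrite -/tape_end /walk_pot /walk_slope; case: ifP => lt_jr.
      by rewrite exprS; lra.
    have -> : val j = r by apply/eqP; rewrite eqn_leq -ltnS ltn_ord leqNgt lt_jr.
    by rewrite /restart_pot exprS; lra.
- case: (cellP le_pw) => [|i a lt_iw|]; rewrite /runtime_pot /=.
  + by case: ifP => lt_jr /=; rewrite /runtime_pot /= ?inordK ?ltnS //; lra.
  + by rewrite -[i.+1%:R]natr1; lra.
  + by rewrite -[(size w).+1%:R]natr1; lra.
Qed.

Lemma clock_expected_runtime : (0 < size w)%N ->
  expected_runtime_le clock w (restart_pot + K%:R + 1).
Proof.
move=> w_gt0.
by apply: (expected_runtime_le_potential (@head_on_tape_step) runtime_pot_ge0
          (fun c => @runtime_pot_step c w_gt0)).
Qed.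

Lemma restart_pot_le_pow : (0 < size w)%N ->
  restart_pot + K%:R + 1 <= (11 * 2 ^+ r.+1 + K%:R + 1) * (size w)%:R ^+ r.+2.
Proof.
move=> w_gt0; set n := (size w)%:R; have n_ge1 : 1 <= n by rewrite ler1n.
have pow_le : ((n + 1) ^+ r.+1) <= 2 ^+ r.+1 * n ^+ r.+1.
  by rewrite -exprMn lerXn2r ?nnegrE //; lra.
have R0_le : restart_pot <= 11 * n * (2 ^+ r.+1 * n ^+ r.+1).
  rewrite /restart_pot /round_cost tape_endE ler_pM ?exprn_ge0 //; lra.
have K_le : K%:R + 1 <= (K%:R + 1) * n ^+ r.+2.
  by rewrite ler_pMr ?exprn_ege1 // ltr_wpDl.
have -> : (11 * 2 ^+ r.+1 + K%:R + 1) * n ^+ r.+2 =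
          11 * n * (2 ^+ r.+1 * n ^+ r.+1) + (K%:R + 1) * n ^+ r.+2.
  by rewrite [n ^+ r.+2]exprS; ring.
lra.
Qed.

Definition drift : R := ((2 * tape_end + 1) * tape_end ^+ r.+1)^-1.

(* Bounds the probability of halting within m steps: walk progress is a
   martingale, every step adds at most [drift] in expectation, and no run
   halts before the delay is over. *)
Definition halt_pot (c : config clock) (m : nat) : R :=
  let p := c.2%:R in
  match c.1 with
  | Delay k => if (m <= k)%N then 0 else p * drift + (m - k)%:R * drift
  | SweepRight => p * drift + m%:R * drift
  | SweepLeft => (2 * tape_end - p) * drift + m%:R * drift
  | Walk j => p * tape_end ^+ j / tape_end ^+ r.+1 + m%:R * drift
  | Return j => tape_end ^+ j.+1 / tape_end ^+ r.+1 + m%:R * drift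
  | Halt => 1 + m%:R * drift
  end.

Lemma tape_end_pow_gt0 j : 0 < tape_end ^+ j.
Proof. by rewrite exprn_gt0 // /tape_end ltr0n. Qed.

Lemma drift_ge0 : 0 <= drift.
Proof.
rewrite /drift invr_ge0 mulr_ge0 ?ltW ?tape_end_pow_gt0 //.
by have := tape_end_ge1; lra.
Qed.

Lemma sweep_drift : (2 * tape_end + 1) * drift = (tape_end ^+ r.+1)^-1.
Proof.
rewrite /drift invfM mulrA divff ?mul1r //.
by have := tape_end_ge1; rewrite -subr_eq0; lra.
Qed.

Lemma halt_pot_ge0 c : head_on_tape c -> 0 <= halt_pot c 0.
Proof.
case: c => q p; rewrite /head_on_tape /= => le_pw.
have le_pL : p%:R <= tape_end by rewrite /tape_end ler_nat.
have inv_ge0 : 0 <= (tape_end ^+ r.+1)^-1 by rewrite invr_ge0 ltW ?tape_end_pow_gt0.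
have := drift_ge0; have := tape_end_ge1 => L_ge1 drift_ge0.
case: q => [k| | |j|j|]; rewrite /halt_pot /= ?mul0r ?addr0 //.
- by rewrite mulr_ge0.
- by rewrite mulr_ge0 //; lra.
- by rewrite !mulr_ge0 // ltW ?tape_end_pow_gt0.
- by rewrite !mulr_ge0 // ltW ?tape_end_pow_gt0.
Qed.

Lemma halt_pot_halting c m : pfa_halting clock c.1 -> 1 <= halt_pot c m.+1.
Proof.
case: c => [[]] //= p _; rewrite /halt_pot /= lerDl.
by rewrite mulr_ge0 ?drift_ge0.
Qed.

Lemma halt_pot_step c m : head_on_tape c -> ~~ pfa_halting clock c.1 ->
  (halt_pot (step w c true) m + halt_pot (step w c false) m) / 2 <= halt_pot c m.+1.
Proof.
case: c => q p; rewrite /head_on_tape /= => le_pw.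
have := drift_ge0; have := sweep_drift => sweep drift_ge0.
have L_eq := tape_endE.
have full_progress : tape_end ^+ r.+1 / tape_end ^+ r.+1 = 1.
  by rewrite divff // gt_eqF ?tape_end_pow_gt0.
case: q => [k| | |j|j|] //= _; rewrite /step /halt_pot /= -?[m.+1%:R]natr1.
- case: k => [[|k] lt_kK] /=; rewrite ?subn0; first lra.
  rewrite inordK ?(ltnW lt_kK) // subSS ltnS; case: ifP => _; lra.
- case: (cellP le_pw) => [|i a lt_iw|] /=.
  + lra.
  + by rewrite lt_iw -[i.+2%:R]natr1 -[i.+1%:R]natr1; lra.
  + by rewrite -/tape_end; lra.
- case: (cellP le_pw) => [|i a lt_iw|] /=.
  + by rewrite expr0 mul1r; lra.
  + by rewrite -[i.+1%:R]natr1; lra.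
  + by rewrite -[(size w).+1%:R]natr1; lra.
- case: (cellP le_pw) => [|i a lt_iw|] /=.
  + lra.
  + by rewrite lt_iw -[i.+2%:R]natr1 -[i.+1%:R]natr1; lra.
  + by rewrite -/tape_end exprS; lra.
- case: (cellP le_pw) => [|i a lt_iw|] /=.
  + case: ifP => lt_jr /=.
      by rewrite inordK ?ltnS //; lra.
    have -> : val j = r by apply/eqP; rewrite eqn_leq -ltnS ltn_ord leqNgt lt_jr.
    lra.
  + lra.
  + lra.
Qed.

Lemma clock_halts_before m :
  prob_halts_before clock w R m <= if (m <= K)%N then 0 else (m - K)%:R * drift.
Proof.
have := prob_halts_before_le_potential (@head_on_tape_step) halt_pot_ge0
  (fun c m _ => @halt_pot_halting c m) (fun c m => @halt_pot_step c m) m (leq0n _).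
by rewrite /halt_pot /=; case: ifP; rewrite ?mul0r ?add0r.
Qed.

End Clock.

Unset Implicit Arguments. Set Strict Implicit.

Theorem lemma1 (R : realType) (Sigma : finType) (t : nat) (f : nat -> int) (eps : R) :
  (0 < t)%N ->
  (exists (C : R) (N : nat), forall n : nat, (N <= n)%N ->
      `|(f n)%:~R : R| <= C * (n%:R) ^+ t) ->
  0 < eps ->
  exists M : pfa Sigma,
    (exists (C : R) (N : nat), forall w : seq Sigma, (N <= size w)%N ->
        expected_runtime_le M w (C * (size w)%:R ^+ t.+1)) /\
    (forall w : seq Sigma, prob_halts_before_int M w R (f (size w)) <= eps).
Proof.
case: t => [|t] // _ [C [N f_le]] eps_gt0.
pose N' := maxn N (Num.Def.archi_bound (`|C| / eps)).
pose K := (\max_(n < N') `|f n|)%N.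
exists (clock Sigma K t); split.
  exists (11 * 2 ^+ t.+1 + K%:R + 1), 1%N => w w_gt0 k.
  exact: le_trans (clock_expected_runtime K t R w_gt0 k) (restart_pot_le_pow K t R w_gt0).
move=> w; case f_w: (f (size w)) => [m|m] /=; last exact: ltW.
apply: le_trans (clock_halts_before K t w R m) _.
case: leqP => [_|lt_Km]; first exact: ltW.
have le_N'w : (N' <= size w)%N.
  rewrite leqNgt; apply/negP => lt_wN'.
  have := @leq_bigmax _ (fun n : 'I_N' => `|f n|%N) (Ordinal lt_wN').
  by rewrite /= f_w leqNgt lt_Km.
have := f_le _ (leq_trans (leq_maxl _ _) le_N'w); rewrite f_w normr_nat => m_le.
apply: (bigO_pow_div_le eps_gt0 _ (le_trans _ m_le)); last by rewrite ler_nat leq_subr.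
apply: lt_le_trans (archi_boundP _) _; first exact: divr_ge0 (normr_ge0 C) (ltW eps_gt0).
by rewrite ler_nat (leq_trans (leq_maxr _ _) le_N'w).
Qed.
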